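(* Let $(X,d)$ be an infinite u.l.f. metric space. Then the Higson corona $\nu X$ has at least $2^{2^{\aleph_0}}$ elements.
   Context: A metric space is u.l.f. if for every $r>0$ the cardinalities of its balls of radius $r$ are uniformly bounded. A Higson function is a bounded $f\colon X\to\mathbb{C}$ such that for all $\varepsilon,R>0$ there is a finite $F\subseteq X$ with $|f(x)-f(y)|<\varepsilon$ whenever $x,y\in X\setminus F$ and $d(x,y)<R$. These form a unital C*-algebra $C_h(X)\subseteq\ell_\infty(X)$; its spectrum $hX$ is the Higson compactification of $X$ (containing $X$), and the Higson corona is $\nu X=hX\setminus X$. *)

From Stdlib Require Import Reals List.
From Coquelicot Require Import Coquelicot.
Import ListNotations.
Open Scope R_scope.

Record is_metric (X : Type) (d : X -> X -> R) : Prop := {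
  metric_nonneg : forall x y, 0 <= d x y;
  metric_eq0 : forall x y, d x y = 0 <-> x = y;
  metric_sym : forall x y, d x y = d y x;
  metric_triangle : forall x y z, d x z <= d x y + d y z
}.
Arguments is_metric {X} d.

Definition infinite_type (X : Type) : Prop :=
  forall l : list X, exists x, ~ In x l.

(* Uniformly locally finite: for every r > 0 the cardinalities of the balls
   B(x,r) = {y | d x y <= r} are uniformly bounded (every duplicate-free list
   of points of such a ball has length <= N). *)
Definition ulf {X : Type} (d : X -> X -> R) : Prop :=
  forall r, 0 < r -> exists N : nat, forall (x : X) (l : list X),
    NoDup l -> (forall y, In y l -> d x y <= r) -> (length l <= N)%nat.

Definition higson {X : Type} (d : X -> X -> R) (f : X -> C) : Prop :=
  (exists M, forall x, Cmod (f x) <= M) /\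
  (forall eps Rad, 0 < eps -> 0 < Rad ->
     exists F : list X, forall x y, ~ In x F -> ~ In y F -> d x y < Rad ->
       Cmod (Cminus (f x) (f y)) < eps).

(* Characters of the unital algebra C_h(X): nonzero (i.e. unital) multiplicative
   linear functionals. A functional is given as a map (X -> C) -> C, of which
   only the values on Higson functions matter. *)
Definition higson_character {X : Type} (d : X -> X -> R) (phi : (X -> C) -> C) : Prop :=
  (forall f g, higson d f -> higson d g ->
     phi (fun x => Cplus (f x) (g x)) = Cplus (phi f) (phi g)) /\
  (forall (c : C) f, higson d f -> phi (fun x => Cmult c (f x)) = Cmult c (phi f)) /\
  (forall f g, higson d f -> higson d g ->
     phi (fun x => Cmult (f x) (g x)) = Cmult (phi f) (phi g)) /\
  phi (fun _ => RtoC 1) = RtoC 1.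

(* Points of the Higson corona nu X = hX \ X: characters of C_h(X) that are not
   evaluation at a point of X. *)
Definition higson_corona_point {X : Type} (d : X -> X -> R) (phi : (X -> C) -> C) : Prop :=
  higson_character d phi /\
  forall x : X, exists f, higson d f /\ phi f <> f x.

(* Two functionals represent the same point of the spectrum iff they agree on C_h(X). *)
Definition same_on_higson {X : Type} (d : X -> X -> R) (phi psi : (X -> C) -> C) : Prop :=
  forall f, higson d f -> phi f = psi f.

From Stdlib Require Import Reals List Lra Lia Classical ClassicalEpsilon Cantor Bool FunctionalExtensionality.
From Coquelicot Require Import Coquelicot.
From mathcomp Require boolp classical_sets filter.
Import ListNotations.
Open Scope R_scope.

(** Since X is infinite and u.l.f., one can choose points [y n] with
    [d (y n) (y m) > n + m + 2] for [n <> m].  Tents of height [a n], radius [n + 1]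
    and slope [1 / (n + 1)] around the [y n] have disjoint supports, and because the
    slopes tend to 0 their sum is a Higson function; so every bounded sequence [a]
    extends to a Higson function with value [a n] at [y n].  Consequently, for every
    non-principal ultrafilter [U] on nat, [f |-> lim_U f (y n)] is a character of
    C_h(X) that is not an evaluation, and distinct ultrafilters give distinct
    characters.  Finally there are 2^(2^aleph0) non-principal ultrafilters: for an
    independent family (A_s) indexed by [s : nat -> bool], each
    [p : (nat -> bool) -> bool] yields one containing the cofinite sets, containing
    A_s when [p s] holds and its complement otherwise. *)

(** * Ultrafilters and ultralimits *)

Record is_ultrafilter {T : Type} (U : (T -> Prop) -> Prop) : Prop := {
  ultrafilter_true : U (fun _ => True);
  ultrafilter_mono : forall A B : T -> Prop, (forall t, A t -> B t) -> U A -> U B;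
  ultrafilter_and : forall A B, U A -> U B -> U (fun t => A t /\ B t);
  ultrafilter_nonempty : forall A, U A -> exists t, A t;
  ultrafilter_em : forall A, U A \/ U (fun t => ~ A t) }.

Arguments ultrafilter_true {T U}.
Arguments ultrafilter_mono {T U} _ {A B}.
Arguments ultrafilter_and {T U} _ {A B}.
Arguments ultrafilter_nonempty {T U} _ {A}.
Arguments ultrafilter_em {T U} _ A.

Lemma ultrafilter_mono2 {T : Type} {U : (T -> Prop) -> Prop} {A B D : T -> Prop} :
  is_ultrafilter U -> (forall t, A t -> B t -> D t) -> U A -> U B -> U D.
Proof.
  intros HU ABD HA HB.
  apply (ultrafilter_mono HU (fun t '(conj At Bt) => ABD t At Bt)).
  exact (ultrafilter_and HU HA HB).
Qed.

Lemma ultrafilter_all {T : Type} {U : (T -> Prop) -> Prop} {A : T -> Prop} :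
  is_ultrafilter U -> (forall t, A t) -> U A.
Proof. intros HU HA. exact (ultrafilter_mono HU (fun t _ => HA t) (ultrafilter_true HU)). Qed.

Lemma ultrafilter_of_fip {T J : Type} (B : J -> T -> Prop) :
  (forall l : list J, exists t, forall i, In i l -> B i t) ->
  exists U, is_ultrafilter U /\ forall i, U (B i).
Proof.
  intros fip.
  set (F := fun S : T -> Prop => exists l, forall t, (forall i, In i l -> B i t) -> S t).
  assert (F_proper : filter.ProperFilter F).
  { constructor.
    - intros [l Hl]. destruct (fip l) as [t Ht]. exact (Hl t Ht).
    - constructor.
      + exists []. intros; exact Logic.I.
      + intros P Q [l1 H1] [l2 H2]. exists (l1 ++ l2). intros t Ht. split.
        * apply H1; intros i Hi; apply Ht, in_or_app; auto.
        * apply H2; intros i Hi; apply Ht, in_or_app; auto.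
      + intros P Q PQ [l H]. exists l. intros t Ht. apply PQ, H, Ht. }
  destruct (filter.ultraFilterLemma F_proper) as [G [G_ultra FG]].
  exists G. split.
  - constructor.
    + apply filter.filterT.
    + intros A B' AB HA. exact (filter.filterS AB HA).
    + intros A B' HA HB. exact (filter.filterI HA HB).
    + intros A HA. apply NNPP. intro Hempty.
      apply (@filter.filter_not_empty _ G _).
      replace classical_sets.set0 with A; auto.
      apply boolp.funext. intro t. apply boolp.propext.
      split; [intro At; apply Hempty; eauto | intros []].
    + intros A. exact (filter.in_ultra_setVsetC A G_ultra).
  - intros i. apply FG. exists [i]. intros t Ht. apply Ht. left; reflexivity.
Qed.

Definition ulim_to {T : Type} (U : (T -> Prop) -> Prop) (a : T -> C) (c : C) : Prop :=
  forall eps, 0 < eps -> U (fun t => Cmod (Cminus (a t) c) < eps).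

(* An arbitrary value when [a] has no ultralimit along [U]. *)
Definition ulim {T : Type} (U : (T -> Prop) -> Prop) (a : T -> C) : C :=
  epsilon (inhabits (RtoC 0)) (ulim_to U a).

Lemma Cmod_le_Re_Im (z : C) : Cmod z <= Rabs (Re z) + Rabs (Im z).
Proof.
  pose proof (Rabs_pos (Re z)). pose proof (Rabs_pos (Im z)).
  unfold Cmod. rewrite <- (sqrt_pow2 (Rabs (Re z) + Rabs (Im z))) by lra.
  apply sqrt_le_1_alt. rewrite <- (pow2_abs (fst z)), <- (pow2_abs (snd z)).
  unfold Re, Im in *. nra.
Qed.

Section Ultralimits.

Context {T : Type} {U : (T -> Prop) -> Prop} (HU : is_ultrafilter U).

Lemma ulim_to_unique a c c' : ulim_to U a c -> ulim_to U a c' -> c = c'.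
Proof.
  intros Hc Hc'. apply NNPP. intro Hne.
  assert (Hpos : 0 < Cmod (Cminus c c')) by (apply Cmod_gt_0, Cminus_eq_contra, Hne).
  set (e := Cmod (Cminus c c') / 2).
  assert (He : 0 < e) by (unfold e; lra).
  destruct (ultrafilter_nonempty HU (ultrafilter_and HU (Hc e He) (Hc' e He))) as [t [Ht Ht']].
  assert (Cmod (Cminus c c') <= Cmod (Cminus (a t) c) + Cmod (Cminus (a t) c')).
  { replace (Cminus c c') with (Cplus (Copp (Cminus (a t) c)) (Cminus (a t) c'))
      by (unfold Cminus; ring).
    rewrite <- (Cmod_opp (Cminus (a t) c)). apply Cmod_triangle. }
  unfold e in *. lra.
Qed.

Lemma ulim_to_eventually a c : U (fun t => a t = c) -> ulim_to U a c.
Proof.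
  intros Hac eps Heps. refine (ultrafilter_mono HU _ Hac). intros t ->.
  replace (Cminus c c) with (RtoC 0) by (unfold Cminus; ring). rewrite Cmod_0. exact Heps.
Qed.

Lemma ulim_to_plus a b c c' : ulim_to U a c -> ulim_to U b c' ->
  ulim_to U (fun t => Cplus (a t) (b t)) (Cplus c c').
Proof.
  intros Ha Hb eps Heps.
  apply (ultrafilter_mono2 HU) with (2 := Ha (eps / 2) ltac:(lra)) (3 := Hb (eps / 2) ltac:(lra)).
  intros t Hat Hbt.
  replace (Cminus (Cplus (a t) (b t)) (Cplus c c')) with (Cplus (Cminus (a t) c) (Cminus (b t) c'))
    by (unfold Cminus; ring).
  pose proof (Cmod_triangle (Cminus (a t) c) (Cminus (b t) c')). lra.
Qed.

Lemma ulim_to_mult a b c c' M : (forall t, Cmod (a t) <= M) ->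
  ulim_to U a c -> ulim_to U b c' -> ulim_to U (fun t => Cmult (a t) (b t)) (Cmult c c').
Proof.
  intros HM Ha Hb eps Heps.
  destruct (ultrafilter_nonempty HU (ultrafilter_true HU)) as [t0 _].
  assert (HM0 : 0 <= M) by (eapply Rle_trans; [apply Cmod_ge_0 | apply (HM t0)]).
  pose proof (Cmod_ge_0 c') as Hc'.
  set (K := M + Cmod c'). set (e := eps / (K + 1)).
  assert (He : 0 < e) by (apply Rdiv_lt_0_compat; unfold K; lra).
  assert (HKe : K * e = eps - e) by (unfold e; field; unfold K; lra).
  apply (ultrafilter_mono2 HU) with (2 := Ha e He) (3 := Hb e He).
  intros t Hat Hbt.
  replace (Cminus (Cmult (a t) (b t)) (Cmult c c'))
    with (Cplus (Cmult (a t) (Cminus (b t) c')) (Cmult c' (Cminus (a t) c))) by (unfold Cminus; ring).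
  eapply Rle_lt_trans; [apply Cmod_triangle|]. rewrite !Cmod_mult.
  pose proof (HM t). pose proof (Cmod_ge_0 (a t)).
  pose proof (Cmod_ge_0 (Cminus (b t) c')). pose proof (Cmod_ge_0 (Cminus (a t) c)).
  unfold K in HKe. nra.
Qed.

Lemma real_ulim_exists (r : T -> R) M : (forall t, Rabs (r t) <= M) ->
  exists L, forall eps, 0 < eps -> U (fun t => Rabs (r t - L) < eps).
Proof.
  intros HM.
  set (E := fun s => U (fun t => s < r t)).
  assert (E_bounded : is_upper_bound E M).
  { intros s Hs. destruct (ultrafilter_nonempty HU Hs) as [t Ht].
    pose proof (proj1 (Rabs_le_between _ _) (HM t)). lra. }
  assert (E_inhabited : E (- M - 1)).
  { apply (ultrafilter_all HU). intros t. pose proof (proj1 (Rabs_le_between _ _) (HM t)). lra. }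
  destruct (completeness E (ex_intro _ M E_bounded) (ex_intro _ _ E_inhabited))
    as [L [L_ub L_least]].
  exists L. intros eps Heps.
  assert (below : exists s, E s /\ L - eps < s).
  { apply NNPP. intro Hno. assert (Hub : is_upper_bound E (L - eps)).
    { intros s Hs. apply Rnot_lt_le. intro Hlt. apply Hno. eauto. }
    specialize (L_least _ Hub). lra. }
  destruct below as [s [Hs Hlt]].
  assert (above : U (fun t => ~ L + eps / 2 < r t)).
  { destruct (ultrafilter_em HU (fun t => L + eps / 2 < r t)) as [H|H]; [|exact H].
    specialize (L_ub _ H). lra. }
  apply (ultrafilter_mono2 HU) with (2 := Hs) (3 := above).
  intros t H1 H2. apply Rabs_def1; lra.
Qed.

Lemma ulim_to_exists a M : (forall t, Cmod (a t) <= M) -> exists c, ulim_to U a c.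
Proof.
  intros HM.
  destruct (real_ulim_exists (fun t => Re (a t)) M) as [x Hx].
  { intros t. eapply Rle_trans; [apply re_le_Cmod | apply HM]. }
  destruct (real_ulim_exists (fun t => Im (a t)) M) as [y Hy].
  { intros t. eapply Rle_trans; [|apply (HM t)].
    eapply Rle_trans; [apply Rmax_r | apply Rmax_Cmod]. }
  exists (x, y). intros eps Heps.
  apply (ultrafilter_mono2 HU) with (2 := Hx (eps / 2) ltac:(lra)) (3 := Hy (eps / 2) ltac:(lra)).
  intros t Hre Him. eapply Rle_lt_trans; [apply Cmod_le_Re_Im|].
  destruct (a t) as [p q]. simpl in *. unfold Rminus in *. lra.
Qed.

Lemma ulim_spec a M : (forall t, Cmod (a t) <= M) -> ulim_to U a (ulim U a).
Proof. intros HM. unfold ulim. apply epsilon_spec. exact (ulim_to_exists a M HM). Qed.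

Lemma ulim_eq a c : ulim_to U a c -> ulim U a = c.
Proof.
  intros Hc. apply (ulim_to_unique a); [unfold ulim; apply epsilon_spec; eauto | exact Hc].
Qed.

End Ultralimits.

(** * An independent family of subsets of nat *)

Fixpoint binary_code (k : nat) (s : nat -> bool) : nat :=
  match k with
  | O => O
  | S k => (Nat.b2n (s O) + 2 * binary_code k (fun i => s (S i)))%nat
  end.

Lemma testbit_binary_code k s i : (i < k)%nat -> Nat.testbit (binary_code k s) i = s i.
Proof.
  revert s i. induction k as [|k IH]; intros s i Hi; [lia|].
  change (binary_code (S k) s) with (Nat.b2n (s O) + 2 * binary_code k (fun i => s (S i)))%nat.
  destruct i as [|i].
  - apply Nat.add_b2n_double_bit0.
  - rewrite <- Nat.testbit_div2, Nat.div2_div, Nat.add_b2n_double_div2.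
    apply (IH (fun i => s (S i))). lia.
Qed.

Definition bitset (l : list nat) : nat := fold_right (fun j acc => Nat.lor (2 ^ j) acc) 0%nat l.

Lemma testbit_bitset l j : Nat.testbit (bitset l) j = true <-> In j l.
Proof.
  induction l as [|i l IH]; simpl.
  - rewrite Nat.bits_0. split; [discriminate | intros []].
  - rewrite Nat.lor_spec, Nat.pow2_bits_eqb, orb_true_iff, IH, Nat.eqb_eq. intuition.
Qed.

(* [n] codes a pair [(k, m)]; it lies in the [s]-th set iff [m] has its bit set at the
   position whose binary digits are [s 0, ..., s (k - 1)]. *)
Definition indep_mem (s : nat -> bool) (n : nat) : bool :=
  let (k, m) := Cantor.of_nat n in Nat.testbit m (binary_code k s).

Lemma list_uniform_bound {A : Type} (Q : A -> nat -> Prop) (l : list A) :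
  (forall a K K', (K <= K')%nat -> Q a K -> Q a K') ->
  (forall a, In a l -> exists K, Q a K) -> exists K, forall a, In a l -> Q a K.
Proof.
  intros mono Hbound. induction l as [|a l IH].
  - exists 0%nat. intros _ [].
  - destruct (Hbound a (or_introl eq_refl)) as [Ka Ha].
    destruct IH as [Kl Hl]; [intros b Hb; apply Hbound; right; exact Hb|].
    exists (Ka + Kl)%nat. intros b [<-|Hb]; eapply mono; [|exact Ha| |apply Hl, Hb]; lia.
Qed.

Lemma finite_prefix_separation (l : list (nat -> bool)) : exists K,
  forall s s', In s l -> In s' l -> (forall i, (i < K)%nat -> s i = s' i) -> s = s'.
Proof.
  destruct (list_uniform_bound
              (fun '(s, s') K => (forall i, (i < K)%nat -> s i = s' i) -> s = s')
              (list_prod l l)) as [K HK].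
  - intros [s s'] K K' HKK' H Hagree. apply H. intros i Hi. apply Hagree. lia.
  - intros [s s'] _. destruct (classic (s = s')) as [->|Hne]; [exists 0%nat; auto|].
    assert (exists i, s i <> s' i) as [i Hi].
    { apply NNPP. intro Hall. apply Hne. extensionality i. apply NNPP. eauto. }
    exists (S i). intros Hagree. exfalso. apply Hi, Hagree. lia.
  - exists K. intros s s' Hs Hs'. apply (HK (s, s')), in_prod; auto.
Qed.

Lemma indep_family_realizes (p : (nat -> bool) -> bool) (l : list (nat -> bool)) (j : nat) :
  exists n, (j <= n)%nat /\ forall s, In s l -> indep_mem s n = p s.
Proof.
  destruct (finite_prefix_separation l) as [K HK].
  set (k := (K + j)%nat). set (m := bitset (map (binary_code k) (filter p l))).
  exists (Cantor.to_nat (k, m)). split.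
  - pose proof (Cantor.to_nat_non_decreasing k m). unfold k in *. lia.
  - intros s Hs. unfold indep_mem. rewrite Cantor.cancel_of_to.
    apply eq_true_iff_eq. unfold m. rewrite testbit_bitset, in_map_iff. split.
    + intros [s' [Hcode Hs']]. apply filter_In in Hs' as [Hs'l Hps'].
      replace s with s'; [exact Hps'|]. apply HK; auto. intros i Hi.
      rewrite <- (testbit_binary_code k s' i), <- (testbit_binary_code k s i), Hcode
        by (unfold k; lia).
      reflexivity.
    + intros Hps. exists s. split; [reflexivity|]. apply filter_In; auto.
Qed.

Lemma indep_ultrafilters_exist : exists U : ((nat -> bool) -> bool) -> (nat -> Prop) -> Prop,
  (forall p, is_ultrafilter (U p)) /\
  (forall p s, U p (fun n => indep_mem s n = p s)) /\
  (forall p j, U p (fun n => (j <= n)%nat)).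
Proof.
  pose (B p (sj : (nat -> bool) * nat) n := (snd sj <= n)%nat /\ indep_mem (fst sj) n = p (fst sj)).
  destruct (choice (fun p U => is_ultrafilter U /\ forall sj, U (B p sj))) as [U HU].
  { intros p. apply (ultrafilter_of_fip (B p)). intros l.
    destruct (indep_family_realizes p (map fst l) (list_max (map snd l))) as [n [Hjn Hn]].
    exists n. intros [s j] Hsj. split.
    - apply Nat.le_trans with (2 := Hjn).
      apply (proj1 (Forall_forall _ _) (proj1 (list_max_le _ _) (Nat.le_refl _))).
      apply in_map_iff. exists (s, j); auto.
    - apply Hn. apply in_map_iff. exists (s, j); auto. }
  exists U. split; [|split].
  - intros p. apply HU.
  - intros p s. destruct (HU p) as [Hultra HB].
    refine (ultrafilter_mono Hultra _ (HB (s, 0%nat))). intros n []; assumption.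
  - intros p j. destruct (HU p) as [Hultra HB].
    refine (ultrafilter_mono Hultra _ (HB (fun _ => true, j))). intros n []; assumption.
Qed.

(** * Sparse sequences in u.l.f. spaces *)

Section UniformlyLocallyFinite.

Context {X : Type} (d : X -> X -> R) (Hulf : ulf d).

Lemma ulf_ball_finite x r : 0 < r -> exists L, forall z, d x z <= r -> In z L.
Proof.
  intros Hr. destruct (Hulf r Hr) as [N HN]. apply NNPP. intros Hno.
  assert (Hgrow : forall k, exists l, NoDup l /\ (forall z, In z l -> d x z <= r) /\ length l = k).
  { induction k as [|k [l (Hl & Hin & Hlen)]].
    - exists []. repeat split; [constructor | intros z []].
    - assert (exists z, d x z <= r /\ ~ In z l) as [z [Hz Hzl]].
      { apply NNPP. intros Hall. apply Hno. exists l. intros z Hz. apply NNPP. eauto. }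
      exists (z :: l). repeat split.
      + constructor; assumption.
      + intros w [<-|Hw]; auto.
      + simpl. congruence. }
  destruct (Hgrow (S N)) as (l & Hl & Hin & Hlen). specialize (HN x l Hl Hin). lia.
Qed.

Lemma ulf_balls_finite (cs : list X) r : 0 < r ->
  exists L, forall c z, In c cs -> d c z <= r -> In z L.
Proof.
  intros Hr. induction cs as [|c cs [L HL]].
  - exists []. intros c z [].
  - destruct (ulf_ball_finite c r Hr) as [Lc HLc]. exists (Lc ++ L).
    intros c' z [<-|Hc'] Hz; apply in_or_app; eauto.
Qed.

Lemma ulf_far_point (Hinf : infinite_type X) r (cs : list X) :
  exists z, forall c, In c cs -> r < d c z.
Proof.
  destruct (ulf_balls_finite cs (Rabs r + 1)) as [L HL]; [pose proof (Rabs_pos r); lra|].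
  destruct (Hinf L) as [z Hz]. exists z. intros c Hc.
  destruct (Rle_lt_dec (d c z) (Rabs r + 1)) as [Hle|Hlt].
  - exfalso. exact (Hz (HL c z Hc Hle)).
  - pose proof (Rle_abs r). lra.
Qed.

End UniformlyLocallyFinite.

Lemma metric_dist_self {X : Type} (d : X -> X -> R) : is_metric d -> forall x, d x x = 0.
Proof. intros Hm x. apply (metric_eq0 _ _ Hm). reflexivity. Qed.

Definition sparse_seq {X : Type} (d : X -> X -> R) (y : nat -> X) : Prop :=
  forall n m, n <> m -> INR n + INR m + 2 < d (y n) (y m).

Fixpoint greedy_prefix {X : Type} (next : nat -> list X -> X) (k : nat) : list X :=
  match k with
  | O => []
  | S k => next k (greedy_prefix next k) :: greedy_prefix next k
  end.

Lemma in_greedy_prefix {X : Type} (next : nat -> list X -> X) k n :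
  (k < n)%nat -> In (next k (greedy_prefix next k)) (greedy_prefix next n).
Proof.
  induction n as [|n IH]; intros Hk; [lia|]. simpl.
  destruct (Nat.eq_dec k n) as [->|Hne]; [left; reflexivity | right; apply IH; lia].
Qed.

Lemma sparse_seq_exists {X : Type} (d : X -> X -> R) :
  is_metric d -> infinite_type X -> ulf d -> exists y, sparse_seq d y.
Proof.
  intros Hm Hinf Hulf.
  destruct (choice (fun (kl : nat * list X) z =>
                      forall c, In c (snd kl) -> 2 * INR (fst kl) + 2 < d c z)) as [far Hfar].
  { intros [k l]. apply (ulf_far_point d Hulf Hinf). }
  set (next := fun k l => far (k, l)).
  set (y := fun n => next n (greedy_prefix next n)).
  assert (Hlt : forall k n, (k < n)%nat -> INR k + INR n + 2 < d (y k) (y n)).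
  { intros k n Hkn.
    pose proof (Hfar (n, greedy_prefix next n) (y k) (in_greedy_prefix next k n Hkn)) as Hfar_n.
    apply lt_INR in Hkn. simpl in Hfar_n. unfold y, next in *. lra. }
  exists y. intros n m Hnm. destruct (Nat.lt_gt_cases n m) as [[Hlt'|Hgt] _]; [exact Hnm| |].
  - apply Hlt, Hlt'.
  - rewrite (metric_sym _ _ Hm), Rplus_comm with (r1 := INR n). apply Hlt, Hgt.
Qed.

Lemma sparse_seq_injective {X : Type} (d : X -> X -> R) y :
  is_metric d -> sparse_seq d y -> forall n m, y n = y m -> n = m.
Proof.
  intros Hm Hy n m E. apply NNPP. intros Hnm. specialize (Hy n m Hnm).
  rewrite E, (metric_dist_self d Hm) in Hy.
  pose proof (pos_INR n). pose proof (pos_INR m). lra.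
Qed.

(** * Higson functions from tents along a sparse sequence *)

Section Bumps.

Context {X : Type} (d : X -> X -> R) (y : nat -> X) (Hm : is_metric d) (Hy : sparse_seq d y).

Lemma sparse_ball_unique x n m : d x (y n) < INR n + 1 -> d x (y m) < INR m + 1 -> n = m.
Proof.
  intros Hn Hmx. apply NNPP. intros Hnm. specialize (Hy n m Hnm).
  pose proof (metric_triangle _ _ Hm (y n) x (y m)) as Htri.
  rewrite (metric_sym _ _ Hm (y n) x) in Htri. lra.
Qed.

Definition near (x : X) : option nat :=
  if excluded_middle_informative (exists n, d x (y n) < INR n + 1)
  then Some (epsilon (inhabits 0%nat) (fun n => d x (y n) < INR n + 1))
  else None.

Lemma near_spec x n : near x = Some n <-> d x (y n) < INR n + 1.
Proof.
  unfold near. destruct excluded_middle_informative as [Hex|Hno].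
  - pose proof (epsilon_spec (inhabits 0%nat) _ Hex) as Heps. split.
    + intros [= <-]. exact Heps.
    + intros Hn. f_equal. exact (sparse_ball_unique x _ _ Heps Hn).
  - split; [discriminate | intros Hn; exfalso; eauto].
Qed.

Definition tent (n : nat) (x : X) : R := Rmax 0 (1 - d x (y n) / (INR n + 1)).

Lemma tent_range n x : 0 <= tent n x <= 1.
Proof.
  pose proof (INRp1_pos n). pose proof (metric_nonneg _ _ Hm x (y n)).
  assert (0 <= d x (y n) / (INR n + 1)) by (apply Rdiv_le_0_compat; lra).
  unfold tent, Rmax. destruct Rle_dec; lra.
Qed.

Lemma tent_center n : tent n (y n) = 1.
Proof.
  unfold tent. rewrite (metric_dist_self d Hm).
  unfold Rdiv. rewrite Rmult_0_l, Rminus_0_r. apply Rmax_right. lra.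
Qed.

Lemma tent_outside n x : ~ d x (y n) < INR n + 1 -> tent n x = 0.
Proof.
  intros Hfar. pose proof (INRp1_pos n).
  assert (1 <= d x (y n) / (INR n + 1)).
  { apply Rmult_le_reg_r with (INR n + 1); [lra|]. unfold Rdiv.
    rewrite Rmult_assoc, Rinv_l by lra. lra. }
  unfold tent. apply Rmax_left. lra.
Qed.

Lemma tent_lipschitz n x z : Rabs (tent n x - tent n z) <= d x z / (INR n + 1).
Proof.
  pose proof (INRp1_pos n).
  assert (Hdiff : Rabs (d z (y n) - d x (y n)) <= d x z).
  { pose proof (metric_triangle _ _ Hm x z (y n)). pose proof (metric_triangle _ _ Hm z x (y n)).
    rewrite (metric_sym _ _ Hm z x) in *. apply Rabs_le; lra. }
  assert (Hquot :
    Rabs (d z (y n) / (INR n + 1) - d x (y n) / (INR n + 1)) <= d x z / (INR n + 1)).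
  { replace (d z (y n) / (INR n + 1) - d x (y n) / (INR n + 1))
      with ((d z (y n) - d x (y n)) / (INR n + 1)) by (field; lra).
    rewrite Rabs_div, (Rabs_right (INR n + 1)) by lra.
    apply Rmult_le_compat_r; [left; apply Rinv_0_lt_compat; lra | exact Hdiff]. }
  apply Rabs_le_between in Hquot.
  unfold tent, Rmax. destruct Rle_dec, Rle_dec; apply Rabs_le; lra.
Qed.

Context (a : nat -> R) (Ha : forall n, Rabs (a n) <= 1).

Definition bump (x : X) : R :=
  match near x with Some n => a n * tent n x | None => 0 end.

Definition slope (x : X) : R :=
  match near x with Some n => / (INR n + 1) | None => 0 end.

Lemma slope_nonneg x : 0 <= slope x.
Proof.
  unfold slope. destruct (near x); [left; apply Rinv_0_lt_compat, INRp1_pos | lra].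
Qed.

Lemma Rabs_coef_mul_le n t : Rabs (a n * t) <= Rabs t.
Proof.
  rewrite Rabs_mult. pose proof (Ha n). pose proof (Rabs_pos t). pose proof (Rabs_pos (a n)). nra.
Qed.

Lemma bump_bounded x : Rabs (bump x) <= 1.
Proof.
  unfold bump. destruct (near x) as [n|].
  - eapply Rle_trans; [apply Rabs_coef_mul_le|]. pose proof (tent_range n x).
    rewrite Rabs_right; lra.
  - rewrite Rabs_R0. lra.
Qed.

Lemma bump_at n : bump (y n) = a n.
Proof.
  assert (Hnear : near (y n) = Some n).
  { apply near_spec. rewrite (metric_dist_self d Hm). apply INRp1_pos. }
  unfold bump. rewrite Hnear, tent_center. apply Rmult_1_r.
Qed.

Lemma bump_apart x z : near z <> near x -> Rabs (bump x) <= d x z * slope x.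
Proof.
  intros Hne. unfold bump, slope. destruct (near x) as [n|] eqn:Ex.
  - rewrite <- (Rminus_0_r (tent n x)), <- (tent_outside n z).
    + eapply Rle_trans; [apply Rabs_coef_mul_le | apply tent_lipschitz].
    + intros Hz. apply Hne, near_spec, Hz.
  - rewrite Rabs_R0, Rmult_0_r. lra.
Qed.

Lemma bump_near_eq x z : near x = near z -> Rabs (bump x - bump z) <= d x z * slope x.
Proof.
  intros Hxz. unfold bump, slope. rewrite <- Hxz. destruct (near x) as [n|].
  - rewrite <- Rmult_minus_distr_l.
    eapply Rle_trans; [apply Rabs_coef_mul_le | apply tent_lipschitz].
  - rewrite Rminus_0_r, Rabs_R0, Rmult_0_r. lra.
Qed.

Lemma bump_diff x z : Rabs (bump x - bump z) <= d x z * (slope x + slope z).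
Proof.
  pose proof (metric_nonneg _ _ Hm x z). pose proof (slope_nonneg x). pose proof (slope_nonneg z).
  destruct (classic (near x = near z)) as [Heq|Hne].
  - pose proof (bump_near_eq x z Heq). nra.
  - pose proof (bump_apart x z (not_eq_sym Hne)). pose proof (bump_apart z x Hne).
    rewrite (metric_sym _ _ Hm z x) in *.
    unfold Rminus. eapply Rle_trans; [apply Rabs_triang|]. rewrite Rabs_Ropp. lra.
Qed.

Lemma slope_small_outside (Hulf : ulf d) N :
  exists F, forall x, ~ In x F -> slope x <= / (INR N + 1).
Proof.
  pose proof (INRp1_pos N) as HN.
  destruct (ulf_balls_finite d Hulf (map y (seq 0 N)) (INR N + 1) HN) as [F HF].
  exists F. intros x Hx. unfold slope. destruct (near x) as [n|] eqn:Ex.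
  - apply near_spec in Ex. apply Rinv_le_contravar; [exact HN|].
    destruct (Nat.lt_ge_cases n N) as [Hlt|Hge].
    + exfalso. apply Hx, (HF (y n)).
      * apply in_map, in_seq. lia.
      * rewrite (metric_sym _ _ Hm). apply lt_INR in Hlt. lra.
    + apply le_INR in Hge. lra.
  - left. apply Rinv_0_lt_compat, HN.
Qed.

Lemma bump_higson (Hulf : ulf d) : higson d (fun x => RtoC (bump x)).
Proof.
  split.
  - exists 1. intros x. rewrite Cmod_R. apply bump_bounded.
  - intros eps Rad Heps HRad.
    destruct (INR_unbounded (2 * Rad / eps)) as [N HN].
    destruct (slope_small_outside Hulf N) as [F HF]. exists F. intros x z Hx Hz Hd.
    rewrite <- RtoC_minus, Cmod_R.
    eapply Rle_lt_trans; [apply bump_diff|].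
    pose proof (HF x Hx). pose proof (HF z Hz).
    pose proof (slope_nonneg x). pose proof (slope_nonneg z). pose proof (metric_nonneg _ _ Hm x z).
    pose proof (INRp1_pos N).
    assert (H2R : 2 * Rad < eps * (INR N + 1)).
    { apply Rmult_lt_compat_r with (r := eps) in HN; [|exact Heps].
      unfold Rdiv in HN. rewrite Rmult_assoc, Rinv_l in HN by lra. lra. }
    assert (Hinv : / (INR N + 1) * (INR N + 1) = 1) by (apply Rinv_l; lra).
    set (t := / (INR N + 1)) in *.
    assert (d x z * (slope x + slope z) <= Rad * (2 * t)) by nra.
    nra.
Qed.

End Bumps.

(** * Characters of C_h(X) from ultrafilters on nat *)

Definition ultra_char {X : Type} (U : (nat -> Prop) -> Prop) (y : nat -> X) (f : X -> C) : C :=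
  ulim U (fun n => f (y n)).

Definition indicator {X : Type} (x z : X) : C :=
  if excluded_middle_informative (z = x) then RtoC 1 else RtoC 0.

Lemma indicator_higson {X : Type} (d : X -> X -> R) x : higson d (indicator x).
Proof.
  split.
  - exists 1. intros z. unfold indicator. destruct excluded_middle_informative;
      rewrite Cmod_R; [rewrite Rabs_R1 | rewrite Rabs_R0]; lra.
  - intros eps Rad Heps _. exists [x]. intros z w Hz Hw _. unfold indicator.
    destruct excluded_middle_informative as [->|_]; [exfalso; apply Hz; left; reflexivity|].
    destruct excluded_middle_informative as [->|_]; [exfalso; apply Hw; left; reflexivity|].
    rewrite <- RtoC_minus, Cmod_R, Rminus_0_r, Rabs_R0. exact Heps.
Qed.

Section UltrafilterCharacters.

Context {X : Type} (d : X -> X -> R) (y : nat -> X).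
Context (U : (nat -> Prop) -> Prop) (HU : is_ultrafilter U).

Lemma ultra_char_spec f : higson d f -> ulim_to U (fun n => f (y n)) (ultra_char U y f).
Proof. intros [[M HM] _]. apply (ulim_spec HU _ M). intros n. apply HM. Qed.

Lemma ultra_char_eventually f c : U (fun n => f (y n) = c) -> ultra_char U y f = c.
Proof. intros Hc. apply (ulim_eq HU), (ulim_to_eventually HU), Hc. Qed.

Lemma ultra_char_character : higson_character d (ultra_char U y).
Proof.
  repeat split.
  - intros f g Hf Hg. apply (ulim_eq HU), (ulim_to_plus HU); apply ultra_char_spec; assumption.
  - intros c f Hf. apply (ulim_eq HU), (ulim_to_mult HU _ _ _ _ (Cmod c)).
    + intros _. apply Rle_refl.
    + apply (ulim_to_eventually HU), (ultrafilter_all HU). reflexivity.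
    + apply ultra_char_spec, Hf.
  - intros f g Hf Hg. destruct Hf as [[M HM] Hf'].
    apply (ulim_eq HU), (ulim_to_mult HU _ _ _ _ M).
    + intros n. apply HM.
    + apply ultra_char_spec. split; [exists M|]; assumption.
    + apply ultra_char_spec, Hg.
  - apply ultra_char_eventually, (ultrafilter_all HU). reflexivity.
Qed.

Lemma ultra_char_not_evaluation :
  (forall j, U (fun n => (j <= n)%nat)) -> (forall n m, y n = y m -> n = m) ->
  forall x, exists f, higson d f /\ ultra_char U y f <> f x.
Proof.
  intros Hcofinite Hinj x. exists (indicator x). split; [apply indicator_higson|].
  assert (Havoid : U (fun n => y n <> x)).
  { destruct (classic (exists n0, y n0 = x)) as [[n0 <-]|Hno].
    - refine (ultrafilter_mono HU _ (Hcofinite (S n0))). intros n Hn E. apply Hinj in E. lia.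
    - apply (ultrafilter_all HU). intros n E. eauto. }
  rewrite (ultra_char_eventually (indicator x) (RtoC 0)).
  - unfold indicator. destruct excluded_middle_informative as [_|Hneq]; [|contradiction].
    intros E. apply C1_nz. symmetry. exact E.
  - refine (ultrafilter_mono HU _ Havoid). intros n Hn. unfold indicator.
    destruct excluded_middle_informative; [contradiction | reflexivity].
Qed.

End UltrafilterCharacters.

Lemma ultra_char_separates {X : Type} (d : X -> X -> R) (y : nat -> X)
  (U : ((nat -> bool) -> bool) -> (nat -> Prop) -> Prop) :
  is_metric d -> ulf d -> sparse_seq d y ->
  (forall p, is_ultrafilter (U p)) -> (forall p s, U p (fun n => indep_mem s n = p s)) ->
  forall p q, same_on_higson d (ultra_char (U p) y) (ultra_char (U q) y) -> p = q.
Proof.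
  intros Hm Hulf Hy Hultra Hindep p q Hpq. extensionality s.
  set (a := fun n => if indep_mem s n then 1 else 0).
  assert (Ha : forall n, Rabs (a n) <= 1).
  { intros n. unfold a. destruct (indep_mem s n); [rewrite Rabs_R1 | rewrite Rabs_R0]; lra. }
  assert (Hval : forall r,
    ultra_char (U r) y (fun x => RtoC (bump d y a x)) = RtoC (if r s then 1 else 0)).
  { intros r. apply (ultra_char_eventually y _ (Hultra r)).
    refine (ultrafilter_mono (Hultra r) _ (Hindep r s)). intros n Hn.
    rewrite (bump_at d y Hm Hy). unfold a. rewrite Hn. reflexivity. }
  specialize (Hpq _ (bump_higson d y Hm Hy a Ha Hulf)). rewrite !Hval in Hpq.
  destruct (p s), (q s); try reflexivity; exfalso; apply C1_nz; [|symmetry]; exact Hpq.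
Qed.

Theorem theorem4p14 (X : Type) (d : X -> X -> R) :
  is_metric d -> infinite_type X -> ulf d ->
  exists F : ((nat -> bool) -> bool) -> ((X -> C) -> C),
    (forall p, higson_corona_point d (F p)) /\
    (forall p q, same_on_higson d (F p) (F q) -> p = q).
Proof.
  intros Hm Hinf Hulf.
  destruct (sparse_seq_exists d Hm Hinf Hulf) as [y Hy].
  destruct indep_ultrafilters_exist as (U & Hultra & Hindep & Hcofinite).
  exists (fun p => ultra_char (U p) y). split.
  - intros p. split.
    + apply ultra_char_character, Hultra.
    + apply ultra_char_not_evaluation; [apply Hultra | apply Hcofinite |].
      apply (sparse_seq_injective d); assumption.
  - apply (ultra_char_separates d y U); assumption.
Qed.
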